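(* Assume (A2)–(A4). Then for every $n\ge0$ and all $(x,t)\in K_{R^*,T^*}$, $\partial_t\phi_n(x,t)\ge(1+\varepsilon_0)|\partial_x\phi_n(x,t)|$ and $\partial_t\psi_n(x,t)\ge(1+\varepsilon_0)|\partial_x\psi_n(x,t)|$.
   Context: Let $p>1$ and $\mu>0$ with $p<1+2/\mu$, and let $R^*,T^*>0$. Write $B_R=\{x\in\mathbb{R}:|x|<R\}$. Fix constants $\gamma_1,\gamma_2>0$ with $\gamma_1+\gamma_2>\max\big(1,(\mu p 2^p)^{1/(p-1)}\big)$ (standing assumption). Assumptions on the real functions $f,g$: (A2) $f\ge\gamma_1$, $g\ge\gamma_2$ on $B_{R^*+T^*}$. (A3) $f,g\in\mathcal{C}^4(\overline{B_{R^*+T^*}})$. (A4) There is $\varepsilon_0>0$ with $2^{-p}(\gamma_1+\gamma_2)^p-\frac{\mu}{2}(\gamma_1+\gamma_2)\ge(2+\varepsilon_0)\max_{x\in B_{R^*+T^*}}(|f'(x)|+|g'(x)|)$. Let $K_{R^*,T^*}=\{(x,t):t>0,\ |x-x_0|<T^*-t\ \text{for some } x_0\in B_{R^*}\}$. Define iterates $\phi_0\equiv\gamma_1$, $\psi_0\equiv\gamma_2$ and, with $\mathcal{N}_n(x,s)=2^{-p}|\phi_n+\psi_n|^p(x,s)-\frac{\mu}{1+s}\frac{(\phi_n+\psi_n)(x,s)}{2}$, $\phi_{n+1}(x,t)=f(x+t)+\int_0^t\mathcal{N}_n(x+t-s,s)\,ds$, $\psi_{n+1}(x,t)=g(x-t)+\int_0^t\mathcal{N}_n(x-t+s,s)\,ds$.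 *)

From Stdlib Require Import Reals.
From Coquelicot Require Import Coquelicot.
Open Scope R_scope.

Definition powabs (y p : R) : R :=
  if Req_EM_T y 0 then 0 else Rpower (Rabs y) p.

Definition C4_closed_ball (f : R -> R) (M : R) : Prop :=
  forall k : nat, (k <= 4)%nat ->
    (forall x, Rabs x < M -> ex_derive_n f k x) /\
    exists h : R -> R,
      (forall x, Rabs x < M -> h x = Derive_n f k x) /\
      (forall x, Rabs x <= M ->
         filterlim h (within (fun y => Rabs y <= M) (locally x)) (locally (h x))).

Definition Nonlin (p mu : R) (phi psi : R -> R -> R) (x s : R) : R :=
  Rpower 2 (- p) * powabs (phi x s + psi x s) p
  - mu / (1 + s) * ((phi x s + psi x s) / 2).

Fixpoint iterates (p mu gamma1 gamma2 : R) (f g : R -> R) (n : nat)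
  : (R -> R -> R) * (R -> R -> R) :=
  match n with
  | O => (fun _ _ => gamma1, fun _ _ => gamma2)
  | S m =>
      let '(ph, ps) := iterates p mu gamma1 gamma2 f g m in
      (fun x t => f (x + t) + RInt (fun s => Nonlin p mu ph ps (x + t - s) s) 0 t,
       fun x t => g (x - t) + RInt (fun s => Nonlin p mu ph ps (x - t + s) s) 0 t)
  end.

Definition phi_n p mu gamma1 gamma2 f g n :=
  fst (iterates p mu gamma1 gamma2 f g n).
Definition psi_n p mu gamma1 gamma2 f g n :=
  snd (iterates p mu gamma1 gamma2 f g n).

Definition in_K (Rs Ts x t : R) : Prop :=
  0 < t /\ exists x0, Rabs x0 < Rs /\ Rabs (x - x0) < Ts - t.

(* The iterates are Duhamel integrals of the source N_n along the characteristics
   x + t = const (for phi) and x - t = const (for psi), so they are regular on a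
   neighbourhood of the cone and satisfy d_t phi_{n+1} = d_x phi_{n+1} + N_n,
   d_t psi_{n+1} = - d_x psi_{n+1} + N_n.  One proves by induction the cone condition
   together with phi_n + psi_n >= gamma1 + gamma2 =: G.
   Writing U = phi_n + psi_n, one has d_x N_n = k d_x U with the slope
   k = 2^-p p U^(p-1) - mu / (2 (1 + s)), and k >= 0 because G^(p-1) > mu p 2^p.
   Along a backward characteristic X(s) = x +- (t - s) the function w(s) = N_n(X(s), s)
   has derivative k (d_t U -+ d_x U) + mu U / (2 (1 + s)^2); the cone condition for
   (phi_n, psi_n) therefore makes w(s) + c int_0^s d_x N_n nondecreasing for
   c = -+ eps and c = +- (2 + eps).  Comparing s = 0, where
   w(0) >= 2^-p G^p - mu G / 2 >= (2 + eps) |f'|, with s = t gives the cone condition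
   for d_x phi_{n+1} = f'(x + t) + int_0^t d_x N_n (and likewise for psi_{n+1}). *)

From Stdlib Require Import Reals Lra Lia FunctionalExtensionality.
From Coquelicot Require Import Coquelicot.
Open Scope R_scope.

Lemma locally_R (P : R -> Prop) y :
  locally y P <-> exists d, 0 < d /\ forall z, Rabs (z - y) < d -> P z.
Proof.
  split.
  - intros [d H]. exists d. split; [apply cond_pos | exact H].
  - intros [d [Hd H]]. exists (mkposreal d Hd). exact H.
Qed.

Lemma continuous_R (f : R -> R) y :
  continuous f y <->
  forall eps, 0 < eps -> exists d, 0 < d /\ forall z, Rabs (z - y) < d -> Rabs (f z - f y) < eps.
Proof.
  split.
  - intros H eps He. apply locally_R. exact (proj1 (filterlim_locally _ _) H (mkposreal eps He)).
  - intros H. apply filterlim_locally. intros eps. apply locally_R. apply H, cond_pos.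
Qed.

(* Coquelicot's generic lemmas do not unify with goals stated over [R]; these are their
   instances at the canonical structures of [R]. *)
Lemma continuous_plus_R (f g : R -> R) x :
  continuous f x -> continuous g x -> continuous (fun z => f z + g z) x.
Proof. exact (@continuous_plus R_UniformSpace R_AbsRing R_NormedModule f g x). Qed.

Lemma continuous_mult_R (f g : R -> R) x :
  continuous f x -> continuous g x -> continuous (fun z => f z * g z) x.
Proof. exact (@continuous_mult R_UniformSpace R_AbsRing f g x). Qed.

Lemma continuous_opp_R (f : R -> R) x : continuous f x -> continuous (fun z => - f z) x.
Proof. exact (@continuous_opp R_UniformSpace R_AbsRing R_NormedModule f x). Qed.

Lemma continuous_const_R (c x : R) : continuous (fun _ : R => c) x.
Proof. exact (@continuous_const R_UniformSpace R_UniformSpace c x). Qed.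

Lemma continuous_id_R (x : R) : continuous (fun z : R => z) x.
Proof. exact (@continuous_id R_UniformSpace x). Qed.

Lemma ex_derive_continuous_R (f : R -> R) x : ex_derive f x -> continuous f x.
Proof. exact (@ex_derive_continuous R_AbsRing R_NormedModule f x). Qed.

Lemma is_derive_plus_R (f g : R -> R) (x df dg : R) :
  is_derive f x df -> is_derive g x dg -> is_derive (fun z => f z + g z) x (df + dg).
Proof. exact (@is_derive_plus R_AbsRing R_NormedModule f g x df dg). Qed.

Lemma is_derive_minus_R (f g : R -> R) (x df dg : R) :
  is_derive f x df -> is_derive g x dg -> is_derive (fun z => f z - g z) x (df - dg).
Proof. exact (@is_derive_minus R_AbsRing R_NormedModule f g x df dg). Qed.

Lemma is_derive_mult_R (f g : R -> R) (x df dg : R) :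
  is_derive f x df -> is_derive g x dg ->
  is_derive (fun z => f z * g z) x (df * g x + f x * dg).
Proof. intros Hf Hg. apply (@is_derive_mult R_AbsRing f g x df dg Hf Hg), Rmult_comm. Qed.

Lemma is_derive_scal_R (f : R -> R) (x k df : R) :
  is_derive f x df -> is_derive (fun z => k * f z) x (k * df).
Proof. apply is_derive_scal. Qed.

Lemma is_derive_comp_R (g h : R -> R) (u dg dh : R) :
  is_derive g (h u) dg -> is_derive h u dh -> is_derive (fun z => g (h z)) u (dh * dg).
Proof. exact (@is_derive_comp R_AbsRing R_NormedModule g h u dg dh). Qed.

Lemma is_derive_eq (f : R -> R) (x l l' : R) : is_derive f x l -> l = l' -> is_derive f x l'.
Proof. intros H ->. exact H. Qed.

Lemma ex_RInt_continuous_R (f : R -> R) a b :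
  (forall z, Rmin a b <= z <= Rmax a b -> continuous f z) -> ex_RInt f a b.
Proof. apply (@ex_RInt_continuous R_CompleteNormedModule). Qed.

Lemma continuous_comp_2d (K : R -> R -> R) (g1 g2 : R -> R) s :
  continuity_2d_pt K (g1 s) (g2 s) -> continuous g1 s -> continuous g2 s ->
  continuous (fun z => K (g1 z) (g2 z)) s.
Proof.
  intros HK H1 H2. apply (continuous_comp_2 g1 g2 K); auto.
  apply continuity_2d_pt_filterlim, HK.
Qed.

Lemma continuity_2d_pt_comp (K g1 g2 : R -> R -> R) x t :
  continuity_2d_pt K (g1 x t) (g2 x t) -> continuity_2d_pt g1 x t -> continuity_2d_pt g2 x t ->
  continuity_2d_pt (fun a b => K (g1 a b) (g2 a b)) x t.
Proof.
  intros HK H1 H2 eps. destruct (HK eps) as [d Hd].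
  destruct (H1 d) as [d1 Hd1], (H2 d) as [d2 Hd2].
  exists (mkposreal _ (Rmin_pos _ _ (cond_pos d1) (cond_pos d2))); simpl. intros u v Hu Hv.
  apply Hd; [apply Hd1 | apply Hd2];
    eapply Rlt_le_trans; eauto using Rmin_l, Rmin_r.
Qed.

Lemma continuity_2d_pt_comp_1d (f : R -> R) (g : R -> R -> R) x t :
  continuous f (g x t) -> continuity_2d_pt g x t -> continuity_2d_pt (fun a b => f (g a b)) x t.
Proof.
  intros Hf Hg. apply continuity_1d_2d_pt_comp; auto. apply continuity_pt_filterlim, Hf.
Qed.

Definition Dx (phi : R -> R -> R) (x t : R) : R := Derive (fun z => phi z t) x.
Definition Dt (phi : R -> R -> R) (x t : R) : R := Derive (fun s => phi x s) t.

Ltac continuity_2d_affine :=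
  repeat first [ apply continuity_2d_pt_plus | apply continuity_2d_pt_minus
               | apply continuity_2d_pt_mult | apply continuity_2d_pt_opp
               | apply continuity_2d_pt_id1 | apply continuity_2d_pt_id2
               | apply continuity_2d_pt_const ].

Ltac Rabs_elim :=
  repeat match goal with
  | H : Rabs _ < _ |- _ => apply Rabs_def2 in H; destruct H
  | H : Rabs _ <= _ |- _ => apply Rabs_le_between in H; destruct H
  end.

Lemma Rpower_pos x y : 0 < Rpower x y.
Proof. apply exp_pos. Qed.

Lemma powabs_0 q : powabs 0 q = 0.
Proof. unfold powabs. destruct (Req_EM_T 0 0); [reflexivity | congruence]. Qed.

Lemma powabs_neq0 y q : y <> 0 -> powabs y q = Rpower (Rabs y) q.
Proof. intros H. unfold powabs. destruct (Req_EM_T y 0); [congruence | reflexivity]. Qed.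

Lemma powabs_ge0 y q : 0 <= powabs y q.
Proof. unfold powabs. destruct (Req_EM_T y 0); [lra | left; apply Rpower_pos]. Qed.

Lemma powabs_small q eps : 0 < q -> 0 < eps ->
  exists d, 0 < d /\ forall z, Rabs z < d -> powabs z q < eps.
Proof.
  intros Hq He. exists (Rpower eps (/ q)). split; [apply Rpower_pos |].
  intros z Hz. destruct (Req_EM_T z 0) as [->|Hz0]; [rewrite powabs_0; lra |].
  rewrite powabs_neq0 by auto.
  replace eps with (Rpower (Rpower eps (/ q)) q).
  - apply Rlt_Rpower_l; auto. split; auto. apply Rabs_pos_lt; auto.
  - rewrite Rpower_mult, Rinv_l by lra. apply Rpower_1; auto.
Qed.

Lemma powabs_continuous q y : 0 < q -> continuous (fun z => powabs z q) y.
Proof.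
  intros Hq. destruct (Req_EM_T y 0) as [->|Hy].
  - apply continuous_R. intros eps He. destruct (powabs_small q eps Hq He) as [d [Hd H]].
    exists d; split; auto. intros z Hz. rewrite Rminus_0_r in Hz.
    rewrite powabs_0, Rminus_0_r, Rabs_pos_eq by apply powabs_ge0. auto.
  - apply continuous_ext_loc with (fun z => Rpower (Rabs z) q).
    + apply locally_R. exists (Rabs y). split; [apply Rabs_pos_lt; auto |].
      intros z Hz. rewrite powabs_neq0; auto. intros ->. rewrite Rminus_0_l, Rabs_Ropp in Hz. lra.
    + apply (continuous_comp Rabs (fun w => Rpower w q)); [apply continuous_Rabs |].
      apply ex_derive_continuous_R. exists (q * Rpower (Rabs y) (q - 1)).
      apply is_derive_Reals, derivable_pt_lim_power, Rabs_pos_lt; auto.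
Qed.

Definition dpowabs (p y : R) : R :=
  p * powabs y (p - 1) * (if Rle_dec 0 y then 1 else -1).

Lemma dpowabs_pos p y : 0 < y -> dpowabs p y = p * Rpower y (p - 1).
Proof.
  intros Hy. unfold dpowabs. rewrite powabs_neq0, Rabs_pos_eq by lra.
  destruct (Rle_dec 0 y); [ring | lra].
Qed.

Lemma is_derive_powabs p y : 1 < p -> is_derive (fun z => powabs z p) y (dpowabs p y).
Proof.
  intros Hp. unfold dpowabs.
  destruct (Rtotal_order y 0) as [Hy|[->|Hy]].
  - destruct (Rle_dec 0 y) as [H|_]; [lra |].
    apply is_derive_ext_loc with (fun z => Rpower (- z) p).
    { apply locally_R. exists (- y). split; [lra |]. intros z Hz. Rabs_elim.
      rewrite powabs_neq0, Rabs_left by lra. reflexivity. }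
    rewrite powabs_neq0, Rabs_left by lra.
    apply is_derive_eq with (-1 * (p * Rpower (- y) (p - 1))); [| ring].
    apply (is_derive_comp_R (fun z => Rpower z p) (fun z => - z)).
    + apply is_derive_Reals, derivable_pt_lim_power. lra.
    + auto_derive; auto.
  - rewrite powabs_0, Rmult_0_r, Rmult_0_l.
    apply is_derive_Reals. intros eps He.
    destruct (powabs_small (p - 1) eps) as [d [Hd H]]; try lra.
    exists (mkposreal d Hd). intros h Hh0 Hh. simpl in Hh.
    rewrite Rplus_0_l, powabs_0, !Rminus_0_r, powabs_neq0 by auto.
    replace (Rpower (Rabs h) p / h) with (Rpower (Rabs h) (p - 1) * (Rabs h / h)).
    + rewrite Rabs_mult, (Rabs_pos_eq (Rpower _ _)) by (left; apply Rpower_pos).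
      replace (Rabs (Rabs h / h)) with 1.
      * rewrite Rmult_1_r, <- powabs_neq0 by auto. auto.
      * unfold Rdiv. rewrite Rabs_mult, Rabs_Rabsolu, Rabs_inv. field. apply Rabs_no_R0; auto.
    + replace p with ((p - 1) + 1) at 2 by ring. rewrite Rpower_plus, Rpower_1.
      * field; auto.
      * apply Rabs_pos_lt; auto.
  - destruct (Rle_dec 0 y) as [_|H]; [| lra].
    apply is_derive_ext_loc with (fun z => Rpower z p).
    { apply locally_R. exists y. split; [lra |]. intros z Hz. Rabs_elim.
      rewrite powabs_neq0, Rabs_pos_eq by lra. reflexivity. }
    rewrite powabs_neq0, Rabs_pos_eq, Rmult_1_r by lra.
    apply is_derive_Reals, derivable_pt_lim_power. lra.
Qed.

Lemma dpowabs_continuous p y : 1 < p -> continuous (dpowabs p) y.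
Proof.
  intros Hp. unfold dpowabs.
  assert (Hsmooth : forall sgn, continuous (fun z => p * powabs z (p - 1) * sgn) y).
  { intros sgn. apply continuous_mult_R; [apply continuous_mult_R | apply continuous_const_R].
    - apply continuous_const_R.
    - apply powabs_continuous. lra. }
  destruct (Rtotal_order y 0) as [Hy|[->|Hy]].
  - apply continuous_ext_loc with (fun z => p * powabs z (p - 1) * -1); auto.
    apply locally_R. exists (- y). split; [lra |]. intros z Hz. Rabs_elim.
    destruct (Rle_dec 0 z); [lra | auto].
  - apply continuous_R. intros eps He.
    destruct (powabs_small (p - 1) (eps / p)) as [d [Hd H]]; try lra.
    { apply Rdiv_lt_0_compat; lra. }
    exists d. split; auto. intros z Hz. rewrite Rminus_0_r in Hz.
    rewrite powabs_0, Rmult_0_r, Rmult_0_l, Rminus_0_r, !Rabs_mult, (Rabs_pos_eq p) by lra.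
    rewrite (Rabs_pos_eq (powabs _ _)) by apply powabs_ge0.
    replace (Rabs (if Rle_dec 0 z then 1 else -1)) with 1.
    + specialize (H z Hz). apply Rmult_lt_compat_l with (r := p) in H; [| lra].
      replace (p * (eps / p)) with eps in H by (field; lra). lra.
    + destruct (Rle_dec 0 z); [rewrite Rabs_R1 | rewrite Rabs_left]; lra.
  - apply continuous_ext_loc with (fun z => p * powabs z (p - 1) * 1); auto.
    apply locally_R. exists y. split; [lra |]. intros z Hz. Rabs_elim.
    destruct (Rle_dec 0 z); [auto | lra].
Qed.

Lemma abs_RInt_le_const_abs (f : R -> R) a b B : ex_RInt f a b ->
  (forall s, Rmin a b <= s <= Rmax a b -> Rabs (f s) <= B) ->
  Rabs (RInt f a b) <= Rabs (b - a) * B.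
Proof.
  intros Hex H. apply (norm_RInt_le_const_abs (V := R_NormedModule) f a b); [exact H |].
  apply (RInt_correct (V := R_CompleteNormedModule)), Hex.
Qed.

(* An open neighbourhood of the cone [K_{R*,T*}] (take [M = R* + T*]) which contains the
   backward characteristics of its points; [t > -1/2] keeps [1 + t] away from [0]. *)
Definition Omega (M x t : R) : Prop := Rabs (x + t) < M /\ Rabs (x - t) < M /\ - / 2 < t.

Lemma Rabs_bounds x : - Rabs x <= x <= Rabs x.
Proof. apply Rabs_le_between, Rle_refl. Qed.

Lemma Omega_open M x t : Omega M x t ->
  exists d, 0 < d /\ forall u v, Rabs (u - x) < d -> Rabs (v - t) < d -> Omega M u v.
Proof.
  intros [H1 [H2 H3]].
  set (m := Rmin (Rmin (M - Rabs (x + t)) (M - Rabs (x - t))) (t + / 2)).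
  assert (0 < m) by (unfold m; repeat apply Rmin_pos; lra).
  assert (m <= M - Rabs (x + t)) by (unfold m; eapply Rle_trans; apply Rmin_l).
  assert (m <= M - Rabs (x - t)) by (unfold m; eapply Rle_trans; [apply Rmin_l | apply Rmin_r]).
  assert (m <= t + / 2) by apply Rmin_r.
  pose proof (Rabs_bounds (x + t)). pose proof (Rabs_bounds (x - t)).
  exists (m / 2). split; [lra |]. intros u v Hu Hv. Rabs_elim.
  repeat split; try apply Rabs_def1; lra.
Qed.

Section Characteristics.

Variables (M sg : R).
Hypothesis Hsg : sg = 1 \/ sg = -1.

Lemma Omega_foot x t : Omega M x t -> Rabs (x + sg * t) < M.
Proof.
  intros [H1 [H2 _]].
  destruct Hsg as [-> | ->]; [rewrite Rmult_1_l | replace (x + -1 * t) with (x - t) by ring]; auto.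
Qed.

Lemma Omega_tube a x t : Omega M x t ->
  exists d, 0 < d /\ forall x' tau s, Rabs (x' - x) < d -> Rabs (tau - t) < d ->
    Rmin 0 t - d < s < Rmax 0 t + d -> Omega M (x' + a * (tau - t) + sg * (tau - s)) s.
Proof.
  intros [H1 [H2 H3]].
  set (m := Rmin (Rmin (Rmin (M - Rabs (x + t)) (M - Rabs (x - t))) (t + / 2)) 1).
  assert (0 < m) by (unfold m; repeat apply Rmin_pos; lra).
  assert (m <= M - Rabs (x + t)) by (unfold m; repeat (eapply Rle_trans; [apply Rmin_l |]); lra).
  assert (m <= M - Rabs (x - t))
    by (unfold m; do 2 (eapply Rle_trans; [apply Rmin_l |]); apply Rmin_r).
  assert (m <= t + / 2) by (unfold m; eapply Rle_trans; [apply Rmin_l | apply Rmin_r]).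
  assert (m <= 1) by apply Rmin_r.
  set (k := Rabs a + 4).
  pose proof (Rabs_pos a).
  assert (0 < m / k) by (apply Rdiv_lt_0_compat; unfold k; lra).
  exists (m / k). split; [assumption |].
  intros x' tau s Hx Ht Hs.
  assert (Rabs (a * (tau - t)) <= Rabs a * (m / k))
    by (rewrite Rabs_mult; apply Rmult_le_compat_l; [apply Rabs_pos | lra]).
  assert (Rabs a * (m / k) + 4 * (m / k) = m) by (unfold k; field; lra).
  assert (0 <= Rabs a * (m / k)) by (apply Rmult_le_pos; [| apply Rdiv_le_0_compat]; unfold k; lra).
  pose proof (Rabs_bounds (x + t)). pose proof (Rabs_bounds (x - t)).
  revert Hs. unfold Rmin, Rmax. destruct (Rle_dec 0 t); intros Hs;
    unfold Omega; Rabs_elim; destruct Hsg as [-> | ->]; repeat split; try apply Rabs_def1; lra.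
Qed.

Lemma Omega_characteristic x t : Omega M x t ->
  exists d, 0 < d /\ forall x' tau s, Rabs (x' - x) < d -> Rabs (tau - t) < d ->
    Rmin 0 t - d < s < Rmax 0 t + d -> Omega M (x' + sg * (tau - s)) s.
Proof.
  intros H. destruct (Omega_tube 0 x t H) as [d [Hd Ht]].
  exists d. split; auto. intros x' tau s H1 H2 H3.
  replace (x' + sg * (tau - s)) with (x' + 0 * (tau - t) + sg * (tau - s)) by ring. auto.
Qed.

Lemma Omega_characteristic_line x t : Omega M x t -> 0 <= t ->
  exists d, 0 < d /\ forall tau, - d < tau < t + d -> Omega M (x + sg * (t - tau)) tau.
Proof.
  intros HO Ht. destruct (Omega_characteristic x t HO) as [d [Hd Hchar]].
  exists d. split; [exact Hd |]. intros tau Htau.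
  apply Hchar; rewrite ?Rminus_eq_0, ?Rabs_R0, ?Rmin_left, ?Rmax_right; lra.
Qed.

Definition continuous_on_Omega (K : R -> R -> R) :=
  forall u v, Omega M u v -> continuity_2d_pt K u v.

Definition char_integral (K : R -> R -> R) (x t : R) : R :=
  RInt (fun s => K (x + sg * (t - s)) s) 0 t.

Lemma continuous_characteristic (K : R -> R -> R) x t s :
  continuity_2d_pt K (x + sg * (t - s)) s -> continuous (fun z => K (x + sg * (t - z)) z) s.
Proof.
  intros HK. apply (continuous_comp_2d K (fun z => x + sg * (t - z)) (fun z => z)); auto.
  - apply continuous_plus_R; [apply continuous_const_R |].
    apply continuous_mult_R; [apply continuous_const_R |].
    apply continuous_plus_R; [apply continuous_const_R | apply continuous_opp_R, continuous_id_R].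
  - apply continuous_id_R.
Qed.

Lemma ex_RInt_characteristic K x t a b : continuous_on_Omega K ->
  (forall s, Rmin a b <= s <= Rmax a b -> Omega M (x + sg * (t - s)) s) ->
  ex_RInt (fun s => K (x + sg * (t - s)) s) a b.
Proof.
  intros HK H. apply ex_RInt_continuous_R. intros s Hs. apply continuous_characteristic, HK, H, Hs.
Qed.

Lemma characteristic_integrand_bounded K x0 t0 : continuity_2d_pt K x0 t0 ->
  exists d B, 0 < d /\ forall x t s, Rabs (x - x0) < d -> Rabs (t - t0) < d ->
    Rmin t0 t <= s <= Rmax t0 t -> Rabs (K (x + sg * (t - s)) s) <= B.
Proof.
  intros HK. destruct (HK (mkposreal 1 Rlt_0_1)) as [d1 Hd1]; simpl in Hd1.
  pose proof (cond_pos d1).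
  exists (d1 / 2), (Rabs (K x0 t0) + 1). split; [lra |]. intros x t s Hx Ht Hs.
  assert (Rabs (K (x + sg * (t - s)) s - K x0 t0) < 1).
  { apply Hd1; revert Hs; unfold Rmin, Rmax;
      destruct Hsg as [-> | ->]; repeat destruct Rle_dec; intros; Rabs_elim; apply Rabs_def1; lra. }
  pose proof (Rabs_triang_inv (K (x + sg * (t - s)) s) (K x0 t0)). lra.
Qed.

Lemma characteristic_integrand_uniform K x0 t0 : continuous_on_Omega K -> Omega M x0 t0 ->
  forall e, 0 < e -> exists d, 0 < d /\ forall x t s, Rabs (x - x0) < d -> Rabs (t - t0) < d ->
    Rmin 0 t0 <= s <= Rmax 0 t0 ->
    Rabs (K (x + sg * (t - s)) s - K (x0 + sg * (t0 - s)) s) < e.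
Proof.
  intros HK H0 e He.
  destruct (Omega_characteristic x0 t0 H0) as [d0 [Hd0 Hchar]].
  set (c := x0 + sg * t0).
  (* In the variables [(s, w)], [w = x + sg * t], the parameters enter only through [w]. *)
  assert (Hc : forall s, Rmin 0 t0 <= s <= Rmax 0 t0 ->
    continuity_2d_pt (fun s w => K (w - sg * s) s) s c).
  { intros s Hs. apply (continuity_2d_pt_comp K (fun s w => w - sg * s) (fun s w => s));
      [| continuity_2d_affine ..].
    replace (c - sg * s) with (x0 + sg * (t0 - s)) by (unfold c; ring).
    apply HK, Hchar; rewrite ?Rminus_eq_0, ?Rabs_R0; lra. }
  destruct (uniform_continuity_2d_1d _ _ _ _ Hc (mkposreal e He)) as [du Hdu]; simpl in Hdu.
  pose proof (cond_pos du).
  exists (du / 2). split; [lra |]. intros x t s Hx Ht Hs.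
  replace (x + sg * (t - s)) with ((x + sg * t) - sg * s) by ring.
  replace (x0 + sg * (t0 - s)) with (c - sg * s) by (unfold c; ring).
  apply (Hdu s c s (x + sg * t)); auto; unfold c; rewrite ?Rminus_eq_0, ?Rabs_R0; try lra;
    destruct Hsg as [-> | ->]; Rabs_elim; lra.
Qed.

Lemma RInt_sub_split (F G : R -> R) a b c : ex_RInt F a b -> ex_RInt F b c -> ex_RInt G a b ->
  RInt F a c - RInt G a b = RInt (fun s => F s - G s) a b + RInt F b c.
Proof.
  intros HFab HFbc HGab.
  change (fun s => F s - G s) with (fun s => minus (F s) (G s)).
  rewrite <- (RInt_Chasles (V := R_CompleteNormedModule) F a b c),
    (RInt_minus (V := R_CompleteNormedModule)) by auto.
  unfold minus, opp; simpl. unfold plus; simpl. ring.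
Qed.

Lemma half_share_lt B e : 0 <= B -> 0 < e -> B * (e / (2 * (B + 1))) < e / 2.
Proof.
  intros HB He. apply Rmult_lt_reg_r with (2 * (B + 1)); [lra |]. field_simplify; nra.
Qed.

Lemma continuity_2d_char_integral K x0 t0 : continuous_on_Omega K -> Omega M x0 t0 ->
  continuity_2d_pt (char_integral K) x0 t0.
Proof.
  intros HK H0 eps. pose proof (cond_pos eps). pose proof (Rabs_pos t0).
  destruct (Omega_characteristic x0 t0 H0) as [d0 [Hd0 Hchar]].
  destruct (characteristic_integrand_bounded K x0 t0 (HK x0 t0 H0)) as [d1 [B [Hd1 HB]]].
  assert (He : 0 < eps / (2 * (Rabs t0 + 1))) by (apply Rdiv_lt_0_compat; lra).
  destruct (characteristic_integrand_uniform K x0 t0 HK H0 _ He) as [d2 [Hd2 Hunif]].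
  assert (0 <= B) by (eapply Rle_trans; [apply Rabs_pos | apply (HB x0 t0 t0)];
    rewrite ?Rminus_eq_0, ?Rabs_R0, ?Rmin_left, ?Rmax_left; lra).
  set (d := Rmin (Rmin (d0 / 2) d1) (Rmin d2 (eps / (2 * (B + 1))))).
  assert (0 < d) by (unfold d; repeat apply Rmin_pos; try apply Rdiv_lt_0_compat; lra).
  assert (d <= d0 / 2 /\ d <= d1 /\ d <= d2 /\ d <= eps / (2 * (B + 1))) as (? & ? & ? & ?).
  { unfold d. split; [| split; [| split]]; eapply Rle_trans;
      [apply Rmin_l | apply Rmin_l | apply Rmin_l | apply Rmin_r
      | apply Rmin_r | apply Rmin_l | apply Rmin_r | apply Rmin_r]. }
  exists (mkposreal d ltac:(assumption)). simpl. intros x t Hx Ht.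
  assert (Hex : forall a b y tau, Rabs (y - x0) < d -> Rabs (tau - t0) < d ->
    (forall s, Rmin a b <= s <= Rmax a b -> Rmin 0 t0 - d0 < s < Rmax 0 t0 + d0) ->
    ex_RInt (fun s => K (y + sg * (tau - s)) s) a b).
  { intros a b y tau Hy Htau Hab. apply ex_RInt_characteristic; auto.
    intros s Hs. apply Hchar, Hab; auto; lra. }
  unfold char_integral. rewrite RInt_sub_split.
  2, 4: apply Hex; rewrite ?Rminus_eq_0, ?Rabs_R0; auto; intros; lra.
  2: apply Hex; auto; intros s; Rabs_elim; unfold Rmin, Rmax; repeat destruct Rle_dec; lra.
  eapply Rle_lt_trans; [apply Rabs_triang |].
  assert (Rabs (RInt (fun s => K (x + sg * (t - s)) s - K (x0 + sg * (t0 - s)) s) 0 t0)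
    <= Rabs t0 * (eps / (2 * (Rabs t0 + 1)))).
  { rewrite <- (Rminus_0_r t0) at 2. apply abs_RInt_le_const_abs.
    - apply (ex_RInt_minus (V := R_CompleteNormedModule)); apply Hex;
        rewrite ?Rminus_eq_0, ?Rabs_R0; auto; intros; lra.
    - intros s Hs. left. apply Hunif; auto; lra. }
  assert (Rabs (RInt (fun s => K (x + sg * (t - s)) s) t0 t) <= B * (eps / (2 * (B + 1)))).
  { rewrite Rmult_comm. eapply Rle_trans.
    - apply abs_RInt_le_const_abs; [| intros s Hs; apply HB; auto; lra].
      apply Hex; auto. intros s; Rabs_elim; unfold Rmin, Rmax; repeat destruct Rle_dec; lra.
    - apply Rmult_le_compat_r; lra. }
  pose proof (half_share_lt (Rabs t0) eps (Rabs_pos t0) H).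
  pose proof (half_share_lt B eps ltac:(assumption) H).
  lra.
Qed.

Definition x_regular (N Nx : R -> R -> R) := forall x t, Omega M x t ->
  continuity_2d_pt N x t /\ continuity_2d_pt Nx x t /\ is_derive (fun z => N z t) x (Nx x t).

Lemma locally_2d_Omega (G : R -> R -> R) u0 v0 :
  Omega M (G u0 v0) v0 -> continuity_2d_pt G u0 v0 -> locally_2d (fun u v => Omega M (G u v) v) u0 v0.
Proof.
  intros HO HG. destruct (Omega_open _ _ _ HO) as [r [Hr Hopen]].
  destruct (HG (mkposreal r Hr)) as [d1 Hd1]; simpl in Hd1.
  exists (mkposreal _ (Rmin_pos _ _ (cond_pos d1) Hr)); simpl. intros u v Hu Hv.
  apply Hopen; [apply Hd1 |]; eapply Rlt_le_trans; eauto using Rmin_l, Rmin_r.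
Qed.

Lemma is_derive_x_regular_comp N Nx (G : R -> R -> R) b u v : x_regular N Nx ->
  Omega M (G u v) v -> is_derive (fun z => G z v) u b ->
  is_derive (fun z => N (G z v) v) u (b * Nx (G u v) v).
Proof.
  intros HN HO Hb. apply (is_derive_comp_R (fun w => N w v) (fun z => G z v)); auto. apply HN, HO.
Qed.

Lemma continuity_2d_Derive_x_regular_comp N Nx (G : R -> R -> R) b u0 v0 : x_regular N Nx ->
  (forall u v, continuity_2d_pt G u v) -> (forall u v, is_derive (fun z => G z v) u b) ->
  Omega M (G u0 v0) v0 -> continuity_2d_pt (fun u v => Derive (fun z => N (G z v) v) u) u0 v0.
Proof.
  intros HN HG Hb HO.
  apply continuity_2d_pt_ext_loc with (fun u v => b * Nx (G u v) v).
  - destruct (locally_2d_Omega G u0 v0 HO (HG u0 v0)) as [d Hd]. exists d. intros u v Hu Hv.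
    symmetry. apply is_derive_unique, is_derive_x_regular_comp; auto.
  - apply continuity_2d_pt_mult; [apply continuity_2d_pt_const |].
    apply (continuity_2d_pt_comp Nx G (fun u v => v)); [apply HN | | apply continuity_2d_pt_id2]; auto.
Qed.

Lemma RInt_Derive_x_regular_comp N Nx (G : R -> R -> R) b u0 y t : x_regular N Nx ->
  (forall u v, is_derive (fun z => G z v) u b) -> (forall s, G u0 s = y + sg * (t - s)) ->
  (forall s, Rmin 0 t <= s <= Rmax 0 t -> Omega M (y + sg * (t - s)) s) ->
  RInt (fun s => Derive (fun u => N (G u s) s) u0) 0 t = b * char_integral Nx y t.
Proof.
  intros HN HGd HG0 HO. unfold char_integral.
  transitivity (RInt (fun s => b * Nx (y + sg * (t - s)) s) 0 t).
  - apply RInt_ext. intros s Hs. apply is_derive_unique. rewrite <- HG0.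
    apply is_derive_x_regular_comp; auto. rewrite HG0. apply HO. lra.
  - apply (RInt_scal (V := R_CompleteNormedModule)), ex_RInt_characteristic; auto.
    intros u v H. apply HN, H.
Qed.

Lemma is_derive_char_integral_x N Nx x t : x_regular N Nx -> Omega M x t ->
  is_derive (fun z => char_integral N z t) x (char_integral Nx x t).
Proof.
  intros HN HO.
  assert (HNc : continuous_on_Omega N) by (intros u v H; apply HN, H).
  destruct (Omega_characteristic x t HO) as [d [Hd Hchar]].
  set (G := fun z v => z + sg * (t - v)).
  assert (HGd : forall u v, is_derive (fun z => G z v) u 1) by (intros; unfold G; auto_derive; auto; ring).
  assert (HG : forall x' s, Rabs (x' - x) < d -> Rmin 0 t <= s <= Rmax 0 t -> Omega M (G x' s) s)
    by (intros; apply Hchar; rewrite ?Rminus_eq_0, ?Rabs_R0; lra).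
  apply is_derive_eq with (RInt (fun s => Derive (fun u => N (G u s) s) x) 0 t).
  - apply (is_derive_RInt_param (fun u s => N (G u s) s) 0 t x).
    + apply locally_R. exists d. split; auto. intros x' Hx' s Hs. eexists.
      apply (is_derive_x_regular_comp N Nx G 1); auto.
    + intros s Hs. apply (continuity_2d_Derive_x_regular_comp N Nx G 1); auto.
      * intros; unfold G; continuity_2d_affine.
      * apply HG; auto. rewrite Rminus_eq_0, Rabs_R0; lra.
    + apply locally_R. exists d. split; auto. intros x' Hx'.
      apply ex_RInt_characteristic; auto. intros s Hs. apply (HG x' s); auto.
  - rewrite (RInt_Derive_x_regular_comp N Nx G 1 x x t); auto; [ring |].
    intros s Hs. apply (HG x s); [rewrite Rminus_eq_0, Rabs_R0 |]; auto.
Qed.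

Lemma is_derive_char_integral_dir N Nx a x t : x_regular N Nx -> Omega M x t ->
  is_derive (fun tau => char_integral N (x + a * (tau - t)) tau) t
    ((a + sg) * char_integral Nx x t + N x t).
Proof.
  intros HN HO.
  assert (HNc : continuous_on_Omega N) by (intros u v H; apply HN, H).
  destruct (Omega_tube a x t HO) as [d [Hd Htube]].
  set (G := fun z v => x + a * (z - t) + sg * (z - v)).
  assert (HGc : forall u v, continuity_2d_pt G u v) by (intros; unfold G; continuity_2d_affine).
  assert (HGd : forall u v, is_derive (fun z => G z v) u (a + sg))
    by (intros; unfold G; auto_derive; auto; ring).
  assert (HG : forall y s, Rabs (y - t) < d -> Rmin 0 t - d < s < Rmax 0 t + d -> Omega M (G y s) s)
    by (intros; apply Htube; rewrite ?Rminus_eq_0, ?Rabs_R0; lra).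
  assert (Hex : forall y a' b', Rabs (y - t) < d ->
    (forall s, Rmin a' b' <= s <= Rmax a' b' -> Rmin 0 t - d < s < Rmax 0 t + d) ->
    ex_RInt (fun s => N (G y s) s) a' b').
  { intros y a' b' Hy Hs. apply ex_RInt_characteristic; auto. intros s Hs'. apply HG, Hs, Hs'; auto. }
  assert (Hd2 : 0 < d / 2) by lra.
  apply is_derive_ext with (fun tau => RInt (fun s => N (G tau s) s) 0 tau); [reflexivity |].
  apply is_derive_eq with
    (RInt (fun s => Derive (fun u => N (G u s) s) t) 0 t + N (G t t) t * 1).
  - apply (is_derive_RInt_param_bound_comp_aux3 (fun u s => N (G u s) s) 0 (fun tau => tau) t 1).
    + apply locally_R. exists d. split; auto. intros y Hy. apply Hex; auto. intros; lra.
    + exists (mkposreal _ Hd2). apply locally_R. exists (d / 2). split; auto.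
      intros y Hy. apply Hex; [lra |]. simpl. intros s. unfold Rmin, Rmax. repeat destruct Rle_dec; lra.
    + auto_derive; auto.
    + exists (mkposreal _ Hd2). apply locally_R. exists (d / 2). split; auto.
      intros y Hy s Hs. eexists. apply (is_derive_x_regular_comp N Nx G (a + sg)); auto.
      apply HG; [lra |]. revert Hs. simpl. unfold Rmin, Rmax. repeat destruct Rle_dec; lra.
    + intros s Hs. apply (continuity_2d_Derive_x_regular_comp N Nx G (a + sg)); auto.
      apply HG; [rewrite Rminus_eq_0, Rabs_R0 |]; lra.
    + exists (mkposreal _ Hd2). simpl. intros u v Hu Hv.
      apply (continuity_2d_Derive_x_regular_comp N Nx G (a + sg)); auto.
      apply HG; [lra |]. Rabs_elim. unfold Rmin, Rmax. repeat destruct Rle_dec; lra.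
    + apply continuity_pt_filterlim, continuous_characteristic, HNc.
      replace (x + a * (t - t) + sg * (t - t)) with (G t t) by reflexivity.
      apply HG; [rewrite Rminus_eq_0, Rabs_R0 |]; unfold Rmin, Rmax; repeat destruct Rle_dec; lra.
  - replace (G t t) with x by (unfold G; ring). rewrite Rmult_1_r. f_equal.
    apply (RInt_Derive_x_regular_comp N Nx G); auto; [intros; unfold G; ring |].
    intros s Hs. replace (x + sg * (t - s)) with (G t s) by (unfold G; ring).
    apply HG; [rewrite Rminus_eq_0, Rabs_R0 |]; lra.
Qed.

Definition C1_ball (f df : R -> R) := forall y, Rabs y < M -> is_derive f y (df y) /\ continuous df y.

(* A weak form of C^1 on [Omega]: the last clause is the chain rule along lines through
   [(x, t)], which is all that differentiating along characteristics requires. *)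
Definition regular (phi : R -> R -> R) := forall x t, Omega M x t ->
  continuity_2d_pt phi x t /\ ex_derive (fun z => phi z t) x /\ continuity_2d_pt (Dx phi) x t /\
  forall a, is_derive (fun tau => phi (x + a * (tau - t)) tau) t (a * Dx phi x t + Dt phi x t).

Definition duhamel (f : R -> R) (N : R -> R -> R) (x t : R) : R :=
  f (x + sg * t) + char_integral N x t.

Definition duhamel_dx (df : R -> R) (Nx : R -> R -> R) (x t : R) : R :=
  df (x + sg * t) + char_integral Nx x t.

Section Duhamel.

Variables (f df : R -> R) (N Nx : R -> R -> R).
Hypothesis Hf : C1_ball f df.
Hypothesis HN : x_regular N Nx.

Lemma continuity_2d_foot (h : R -> R) x t : continuous h (x + sg * t) ->
  continuity_2d_pt (fun a b => h (a + sg * b)) x t.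
Proof.
  intros Hh. apply (continuity_2d_pt_comp_1d h (fun a b => a + sg * b)); auto.
  continuity_2d_affine.
Qed.

Lemma continuity_2d_duhamel x t : Omega M x t -> continuity_2d_pt (duhamel f N) x t.
Proof.
  intros HO. apply continuity_2d_pt_plus.
  - apply continuity_2d_foot, ex_derive_continuous_R. eexists. apply Hf, Omega_foot, HO.
  - apply continuity_2d_char_integral; auto. intros u v H. apply HN, H.
Qed.

Lemma continuity_2d_duhamel_dx x t : Omega M x t -> continuity_2d_pt (duhamel_dx df Nx) x t.
Proof.
  intros HO. apply continuity_2d_pt_plus.
  - apply continuity_2d_foot, Hf, Omega_foot, HO.
  - apply continuity_2d_char_integral; auto. intros u v H. apply HN, H.
Qed.

Lemma is_derive_duhamel_x x t : Omega M x t ->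
  is_derive (fun z => duhamel f N z t) x (duhamel_dx df Nx x t).
Proof.
  intros HO. apply is_derive_plus_R.
  - apply is_derive_eq with (1 * df (x + sg * t)); [| ring].
    apply (is_derive_comp_R f (fun z => z + sg * t)).
    + apply Hf, Omega_foot, HO.
    + auto_derive; auto.
  - apply is_derive_char_integral_x; auto.
Qed.

Lemma is_derive_duhamel_dir a x t : Omega M x t ->
  is_derive (fun tau => duhamel f N (x + a * (tau - t)) tau) t
    ((a + sg) * duhamel_dx df Nx x t + N x t).
Proof.
  intros HO. unfold duhamel_dx.
  apply is_derive_eq with ((a + sg) * df (x + sg * t) + ((a + sg) * char_integral Nx x t + N x t));
    [apply is_derive_plus_R | ring].
  - apply (is_derive_comp_R f (fun tau => x + a * (tau - t) + sg * tau)).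
    + replace (x + a * (t - t) + sg * t) with (x + sg * t) by ring. apply Hf, Omega_foot, HO.
    + auto_derive; auto. ring.
  - apply is_derive_char_integral_dir; auto.
Qed.

Lemma Dx_duhamel x t : Omega M x t -> Dx (duhamel f N) x t = duhamel_dx df Nx x t.
Proof. intros HO. apply is_derive_unique, is_derive_duhamel_x, HO. Qed.

Lemma Dt_duhamel x t : Omega M x t -> Dt (duhamel f N) x t = sg * duhamel_dx df Nx x t + N x t.
Proof.
  intros HO. apply is_derive_unique.
  apply (is_derive_ext (fun tau => duhamel f N (x + 0 * (tau - t)) tau)).
  - intros tau. rewrite Rmult_0_l, Rplus_0_r. reflexivity.
  - rewrite <- (Rplus_0_l sg) at 1. apply is_derive_duhamel_dir, HO.
Qed.

Lemma duhamel_regular : regular (duhamel f N).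
Proof.
  intros x t HO. split; [| split; [| split]].
  - apply continuity_2d_duhamel, HO.
  - eexists. apply is_derive_duhamel_x, HO.
  - apply continuity_2d_pt_ext_loc with (duhamel_dx df Nx); [| apply continuity_2d_duhamel_dx, HO].
    destruct (Omega_open M x t HO) as [d [Hd Hopen]]. exists (mkposreal d Hd). simpl.
    intros u v Hu Hv. symmetry. apply Dx_duhamel, Hopen; auto.
  - intros a. rewrite Dx_duhamel, Dt_duhamel by exact HO.
    apply is_derive_eq with ((a + sg) * duhamel_dx df Nx x t + N x t); [| ring].
    apply is_derive_duhamel_dir, HO.
Qed.

End Duhamel.

End Characteristics.

Definition Nonlin_slope (p mu : R) (phi psi : R -> R -> R) (x t : R) : R :=
  Rpower 2 (- p) * dpowabs p (phi x t + psi x t) - mu / (1 + t) / 2.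

Definition Nonlin_dx (p mu : R) (phi psi : R -> R -> R) (x t : R) : R :=
  Nonlin_slope p mu phi psi x t * (Dx phi x t + Dx psi x t).

Section Nonlinearity.

Variables (M p mu : R) (phi psi : R -> R -> R).
Hypothesis Hp : 1 < p.
Hypothesis Hphi : regular M phi.
Hypothesis Hpsi : regular M psi.

Lemma is_derive_Nonlin_path (U T : R -> R) dU dT s :
  is_derive U s dU -> is_derive T s dT -> 0 < 1 + T s ->
  is_derive (fun z => Rpower 2 (- p) * powabs (U z) p - mu / (1 + T z) * (U z / 2)) s
    ((Rpower 2 (- p) * dpowabs p (U s) - mu / (1 + T s) / 2) * dU
     + mu * dT / (1 + T s) ^ 2 * (U s / 2)).
Proof.
  intros HU HT HTs.
  apply is_derive_eq with (Rpower 2 (- p) * (dU * dpowabs p (U s))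
    - (dT * (- mu / (1 + T s) ^ 2) * (U s / 2) + mu / (1 + T s) * (/ 2 * dU))); [| field; lra].
  apply is_derive_minus_R;
    [apply is_derive_scal_R | apply (is_derive_mult_R (fun z => mu / (1 + T z)) (fun z => U z / 2))].
  - apply (is_derive_comp_R (fun y => powabs y p) U); auto. apply is_derive_powabs, Hp.
  - apply (is_derive_comp_R (fun y => mu / (1 + y)) T); auto.
    auto_derive; [lra | field; lra].
  - apply (is_derive_ext (fun z => / 2 * U z)).
    + intros z. unfold Rdiv. apply Rmult_comm.
    + apply is_derive_scal_R, HU.
Qed.

Lemma continuity_2d_Nonlin_coeff x t : - 1 < t -> continuity_2d_pt (fun _ b => mu / (1 + b)) x t.
Proof.
  intros Ht. apply (continuity_2d_pt_comp_1d (fun s => mu / (1 + s)) (fun _ b => b));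
    [| apply continuity_2d_pt_id2].
  apply ex_derive_continuous_R. auto_derive. lra.
Qed.

Lemma Nonlin_x_regular : x_regular M (Nonlin p mu phi psi) (Nonlin_dx p mu phi psi).
Proof.
  intros x t HO.
  destruct (Hphi x t HO) as [Cphi [Dphi [CDphi _]]], (Hpsi x t HO) as [Cpsi [Dpsi [CDpsi _]]].
  assert (Ht : - 1 < t) by (destruct HO as [_ [_ H]]; lra).
  assert (Cu : continuity_2d_pt (fun a b => phi a b + psi a b) x t)
    by (apply continuity_2d_pt_plus; auto).
  pose proof (continuity_2d_Nonlin_coeff x t Ht).
  split; [| split].
  - unfold Nonlin. apply continuity_2d_pt_minus; apply continuity_2d_pt_mult; auto.
    + apply continuity_2d_pt_const.
    + apply (continuity_2d_pt_comp_1d (fun y => powabs y p) (fun a b => phi a b + psi a b)); auto.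
      apply powabs_continuous. lra.
    + apply continuity_2d_pt_mult; auto using continuity_2d_pt_const.
  - unfold Nonlin_dx, Nonlin_slope. apply continuity_2d_pt_mult.
    + apply continuity_2d_pt_minus; apply continuity_2d_pt_mult; auto using continuity_2d_pt_const.
      apply (continuity_2d_pt_comp_1d (dpowabs p) (fun a b => phi a b + psi a b)); auto.
      apply dpowabs_continuous, Hp.
    + apply continuity_2d_pt_plus; auto.
  - set (U := fun z => phi z t + psi z t).
    assert (HU : is_derive U x (Dx phi x t + Dx psi x t))
      by (apply is_derive_plus_R; apply Derive_correct; auto).
    assert (HT : is_derive (fun _ : R => t) x 0) by (auto_derive; auto).
    eapply is_derive_eq; [exact (is_derive_Nonlin_path U (fun _ => t) _ _ x HU HT ltac:(lra)) |].
    unfold Nonlin_dx, Nonlin_slope, U. field. lra.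
Qed.

Lemma is_derive_Nonlin_dir a x t : Omega M x t ->
  is_derive (fun tau => Nonlin p mu phi psi (x + a * (tau - t)) tau) t
    (Nonlin_slope p mu phi psi x t * (a * (Dx phi x t + Dx psi x t) + (Dt phi x t + Dt psi x t))
     + mu / (1 + t) ^ 2 * ((phi x t + psi x t) / 2)).
Proof.
  intros HO.
  destruct (Hphi x t HO) as [_ [_ [_ Dphi]]], (Hpsi x t HO) as [_ [_ [_ Dpsi]]].
  assert (Ht : - 1 < t) by (destruct HO as [_ [_ H]]; lra).
  set (U := fun tau => phi (x + a * (tau - t)) tau + psi (x + a * (tau - t)) tau).
  assert (HU : is_derive U t (a * Dx phi x t + Dt phi x t + (a * Dx psi x t + Dt psi x t)))
    by (apply is_derive_plus_R; auto).
  assert (HT : is_derive (fun tau : R => tau) t 1) by (auto_derive; auto).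
  assert (HUt : U t = phi x t + psi x t)
    by (unfold U; rewrite Rminus_eq_0, Rmult_0_r, Rplus_0_r; reflexivity).
  eapply is_derive_eq; [exact (is_derive_Nonlin_path U (fun tau => tau) _ _ t HU HT ltac:(lra)) |].
  rewrite HUt. unfold Nonlin_slope. field. lra.
Qed.

End Nonlinearity.

Lemma le_of_derive_nonneg (f df : R -> R) a b : a <= b ->
  (forall x, a <= x <= b -> is_derive f x (df x)) -> (forall x, a <= x <= b -> 0 <= df x) ->
  f a <= f b.
Proof.
  intros Hab Hf Hdf.
  destruct (MVT_gen f a b df) as [c [Hc Hmvt]];
    rewrite ?Rmin_left, ?Rmax_right in * by exact Hab.
  - intros x Hx. apply Hf. lra.
  - intros x Hx. apply continuity_pt_filterlim, ex_derive_continuous_R. eexists. apply Hf, Hx.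
  - assert (0 <= df c * (b - a)) by (apply Rmult_le_pos; [apply Hdf, Hc | lra]). lra.
Qed.

Lemma le_plus_RInt_of_derive (w dw h : R -> R) c t d : 0 <= t -> 0 < d ->
  (forall tau, 0 <= tau <= t -> is_derive w tau (dw tau)) ->
  (forall tau, - d < tau < t + d -> continuous h tau) ->
  (forall tau, 0 <= tau <= t -> 0 <= dw tau + c * h tau) ->
  w 0 <= w t + c * RInt h 0 t.
Proof.
  intros Ht Hd Hw Hh Hpos.
  assert (HI : forall tau, 0 <= tau <= t -> is_derive (fun z => RInt h 0 z) tau (h tau)).
  { intros tau Htau.
    apply (is_derive_RInt (V := R_CompleteNormedModule) h (fun z => RInt h 0 z) 0); [| apply Hh; lra].
    apply locally_R. exists d. split; auto. intros b Hb.
    apply (RInt_correct (V := R_CompleteNormedModule)), ex_RInt_continuous_R.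
    intros z Hz. apply Hh. revert Hz. Rabs_elim. unfold Rmin, Rmax. destruct Rle_dec; lra. }
  assert (Hle : w 0 + c * RInt h 0 0 <= w t + c * RInt h 0 t).
  { apply (le_of_derive_nonneg (fun z => w z + c * RInt h 0 z) (fun z => dw z + c * h z)); auto.
    intros tau Htau. apply is_derive_plus_R; [apply Hw, Htau | apply is_derive_scal_R, HI, Htau]. }
  rewrite RInt_point in Hle. unfold zero in Hle; simpl in Hle. lra.
Qed.

Lemma Rpower_threshold p mu G : 1 < p -> 0 < mu ->
  Rpower (mu * p * Rpower 2 p) (/ (p - 1)) < G -> mu * p * Rpower 2 p < Rpower G (p - 1).
Proof.
  intros Hp Hmu H.
  assert (0 < mu * p * Rpower 2 p) by (apply Rmult_lt_0_compat; [nra | apply Rpower_pos]).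
  replace (mu * p * Rpower 2 p) with (Rpower (Rpower (mu * p * Rpower 2 p) (/ (p - 1))) (p - 1)).
  - apply Rlt_Rpower_l; [lra | split; [apply Rpower_pos | exact H]].
  - rewrite Rpower_mult, Rinv_l by lra. apply Rpower_1; auto.
Qed.

Definition Nonlin_floor (p mu G : R) : R := Rpower 2 (- p) * Rpower G p - mu / 2 * G.

Lemma div_one_plus_le mu s : 0 <= mu -> 0 <= s -> mu / (1 + s) <= mu.
Proof.
  intros Hmu Hs. unfold Rdiv. rewrite <- (Rmult_1_r mu) at 2.
  apply Rmult_le_compat_l; [exact Hmu |]. rewrite <- Rinv_1 at 2. apply Rinv_le_contravar; lra.
Qed.

Section Floor.

Variables (p mu G : R).
Hypothesis Hp : 1 < p.
Hypothesis Hmu : 0 < mu.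
Hypothesis HG : 0 < G.
Hypothesis Hthreshold : mu * p * Rpower 2 p < Rpower G (p - 1).

Lemma slope_nonneg u s : G <= u -> 0 <= s ->
  0 <= Rpower 2 (- p) * dpowabs p u - mu / (1 + s) / 2.
Proof.
  intros Hu Hs. rewrite dpowabs_pos by lra.
  assert (Rpower G (p - 1) <= Rpower u (p - 1)) by (apply Rle_Rpower_l; lra).
  assert (H2p : Rpower 2 (- p) * Rpower 2 p = 1)
    by (rewrite <- Rpower_plus, Rplus_opp_l; apply Rpower_O; lra).
  pose proof (div_one_plus_le mu s ltac:(lra) Hs).
  assert (mu * p <= Rpower 2 (- p) * (p * Rpower u (p - 1))).
  { assert (E : Rpower 2 (- p) * (mu * p * Rpower 2 p) = mu * p)
      by (transitivity (mu * p * (Rpower 2 (- p) * Rpower 2 p)); [ring | rewrite H2p; ring]).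
    rewrite <- E at 1.
    apply Rmult_le_compat_l; [left; apply Rpower_pos |].
    assert (Rpower u (p - 1) <= p * Rpower u (p - 1))
      by (rewrite <- (Rmult_1_l (Rpower u (p - 1))) at 1;
          apply Rmult_le_compat_r; [left; apply Rpower_pos | lra]).
    lra. }
  assert (mu <= mu * p) by (rewrite <- (Rmult_1_r mu) at 1; apply Rmult_le_compat_l; lra).
  lra.
Qed.

Lemma Nonlin_floor_le u s : G <= u -> 0 <= s ->
  Nonlin_floor p mu G <= Rpower 2 (- p) * powabs u p - mu / (1 + s) * (u / 2).
Proof.
  intros Hu Hs. rewrite powabs_neq0, Rabs_pos_eq by lra.
  assert (Hmono : Nonlin_floor p mu G <= Nonlin_floor p mu u).
  { apply (le_of_derive_nonneg (Nonlin_floor p mu) (fun z => Rpower 2 (- p) * dpowabs p z - mu / 2));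
      [exact Hu | |].
    - intros z Hz. unfold Nonlin_floor. rewrite dpowabs_pos by lra.
      apply is_derive_minus_R; [apply is_derive_scal_R |].
      + apply is_derive_Reals, derivable_pt_lim_power. lra.
      + auto_derive; auto. ring.
    - intros z Hz. pose proof (slope_nonneg z 0 (proj1 Hz) (Rle_refl 0)).
      rewrite Rplus_0_r, Rdiv_1_r in H. lra. }
  unfold Nonlin_floor in *.
  pose proof (div_one_plus_le mu s ltac:(lra) Hs).
  assert (mu / (1 + s) * (u / 2) <= mu / 2 * u)
    by (replace (mu / 2 * u) with (mu * (u / 2)) by field; apply Rmult_le_compat_r; lra).
  lra.
Qed.

End Floor.

Definition cone_invariant (M G eps : R) (phi psi : R -> R -> R) := forall x t, Omega M x t -> 0 <= t ->
  G <= phi x t + psi x t /\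
  (1 + eps) * Rabs (Dx phi x t) <= Dt phi x t /\ (1 + eps) * Rabs (Dx psi x t) <= Dt psi x t.

Lemma cone_inequality_of_bounds sg F I Nv w0 eps : sg = 1 \/ sg = -1 -> 0 < eps ->
  w0 <= Nv + (- eps * sg) * I -> w0 <= Nv + ((2 + eps) * sg) * I -> (2 + eps) * Rabs F <= w0 ->
  (1 + eps) * Rabs (F + I) <= sg * (F + I) + Nv.
Proof.
  intros Hsg He H1 H2 HF. pose proof (Rabs_bounds F).
  destruct (Rle_dec 0 (F + I)); [rewrite (Rabs_pos_eq (F + I)) | rewrite (Rabs_left (F + I))];
    try lra; destruct Hsg as [-> | ->]; nra.
Qed.

Section ConeStep.

Variables (M p mu G eps sg : R) (phi psi : R -> R -> R).
Hypothesis Hsg : sg = 1 \/ sg = -1.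
Hypothesis Hp : 1 < p.
Hypothesis Hmu : 0 < mu.
Hypothesis Heps : 0 < eps.
Hypothesis HG : 0 < G.
Hypothesis Hthreshold : mu * p * Rpower 2 p < Rpower G (p - 1).
Hypothesis Hphi : regular M phi.
Hypothesis Hpsi : regular M psi.
Hypothesis Hinv : cone_invariant M G eps phi psi.

Lemma cone_invariant_sum x t : Omega M x t -> 0 <= t ->
  (1 + eps) * Rabs (Dx phi x t + Dx psi x t) <= Dt phi x t + Dt psi x t.
Proof.
  intros HO Ht. destruct (Hinv x t HO Ht) as [_ [H1 H2]].
  pose proof (Rabs_triang (Dx phi x t) (Dx psi x t)).
  assert ((1 + eps) * Rabs (Dx phi x t + Dx psi x t)
    <= (1 + eps) * (Rabs (Dx phi x t) + Rabs (Dx psi x t))) by (apply Rmult_le_compat_l; lra).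
  lra.
Qed.

Lemma Nonlin_characteristic_comparison c x t : Rabs (c - sg) <= 1 + eps ->
  Omega M x t -> 0 <= t ->
  Nonlin p mu phi psi (x + sg * t) 0
    <= Nonlin p mu phi psi x t + c * char_integral sg (Nonlin_dx p mu phi psi) x t.
Proof.
  intros Hc HO Ht.
  destruct (Omega_characteristic_line M sg Hsg x t HO Ht) as [d [Hd Hline]].
  set (X := fun tau => x + sg * (t - tau)).
  set (U := fun tau => phi (X tau) tau + psi (X tau) tau).
  set (ux := fun tau => Dx phi (X tau) tau + Dx psi (X tau) tau).
  set (ut := fun tau => Dt phi (X tau) tau + Dt psi (X tau) tau).
  set (k := fun tau => Nonlin_slope p mu phi psi (X tau) tau).
  replace (x + sg * t) with (X 0) by (unfold X; ring).
  replace (Nonlin p mu phi psi x t) with (Nonlin p mu phi psi (X t) t)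
    by (unfold X; rewrite Rminus_eq_0, Rmult_0_r, Rplus_0_r; reflexivity).
  apply (le_plus_RInt_of_derive (fun tau => Nonlin p mu phi psi (X tau) tau)
    (fun tau => k tau * (- sg * ux tau + ut tau) + mu / (1 + tau) ^ 2 * (U tau / 2)) _ c t d Ht Hd).
  - intros tau Htau.
    apply (is_derive_ext (fun tau' => Nonlin p mu phi psi (X tau + - sg * (tau' - tau)) tau')).
    + intros tau'. unfold X. f_equal. ring.
    + apply (is_derive_Nonlin_dir M); auto. apply Hline. lra.
  - intros tau Htau. apply continuous_characteristic.
    apply (Nonlin_x_regular M p mu phi psi Hp Hphi Hpsi), Hline, Htau.
  - intros tau Htau. assert (HOt : Omega M (X tau) tau) by (apply Hline; lra).
    destruct (Hinv (X tau) tau HOt (proj1 Htau)) as [HU _].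
    pose proof (cone_invariant_sum (X tau) tau HOt (proj1 Htau)) as Hcone. fold (ux tau) (ut tau) in Hcone.
    assert (Hk : 0 <= k tau) by (apply (slope_nonneg p mu G); auto; lra).
    assert (Hdir : 0 <= ut tau + (c - sg) * ux tau).
    { pose proof (Rabs_bounds ((c - sg) * ux tau)). rewrite Rabs_mult in H.
      assert (Rabs (c - sg) * Rabs (ux tau) <= (1 + eps) * Rabs (ux tau))
        by (apply Rmult_le_compat_r; [apply Rabs_pos | exact Hc]).
      lra. }
    change (Nonlin_dx p mu phi psi (x + sg * (t - tau)) tau) with (k tau * ux tau).
    assert (0 <= mu / (1 + tau) ^ 2 * (U tau / 2)).
    { apply Rmult_le_pos; [apply Rdiv_le_0_compat; [lra | apply pow_lt; lra] | unfold U; lra]. }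
    assert (0 <= k tau * (ut tau + (c - sg) * ux tau)) by (apply Rmult_le_pos; assumption).
    replace (k tau * (- sg * ux tau + ut tau) + mu / (1 + tau) ^ 2 * (U tau / 2) + c * (k tau * ux tau))
      with (k tau * (ut tau + (c - sg) * ux tau) + mu / (1 + tau) ^ 2 * (U tau / 2)) by ring.
    lra.
Qed.

Lemma Nonlin_floor_le_characteristic x t tau : Omega M x t -> 0 <= t -> 0 <= tau <= t ->
  Nonlin_floor p mu G <= Nonlin p mu phi psi (x + sg * (t - tau)) tau.
Proof.
  intros HO Ht Htau.
  destruct (Omega_characteristic_line M sg Hsg x t HO Ht) as [d [Hd Hline]].
  assert (HOt : Omega M (x + sg * (t - tau)) tau) by (apply Hline; lra).
  destruct (Hinv _ _ HOt (proj1 Htau)) as [HU _].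
  apply Nonlin_floor_le; auto. lra.
Qed.

Lemma char_integral_Nonlin_nonneg x t : 0 <= Nonlin_floor p mu G -> Omega M x t -> 0 <= t ->
  0 <= char_integral sg (Nonlin p mu phi psi) x t.
Proof.
  intros Hfloor HO Ht.
  destruct (Omega_characteristic_line M sg Hsg x t HO Ht) as [d [Hd Hline]].
  apply RInt_ge_0; [exact Ht | |].
  - apply (ex_RInt_characteristic M).
    + intros u v H. apply (Nonlin_x_regular M p mu phi psi Hp Hphi Hpsi), H.
    + intros s Hs. rewrite Rmin_left, Rmax_right in Hs by lra. apply Hline. lra.
  - intros s Hs. eapply Rle_trans; [exact Hfloor |].
    apply Nonlin_floor_le_characteristic; auto; lra.
Qed.

Lemma duhamel_cone_condition f df x t : C1_ball M f df ->
  (forall y, Rabs y < M -> (2 + eps) * Rabs (df y) <= Nonlin_floor p mu G) ->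
  Omega M x t -> 0 <= t ->
  (1 + eps) * Rabs (duhamel_dx sg df (Nonlin_dx p mu phi psi) x t)
    <= sg * duhamel_dx sg df (Nonlin_dx p mu phi psi) x t + Nonlin p mu phi psi x t.
Proof.
  intros Hf Hdf HO Ht.
  apply (cone_inequality_of_bounds sg _ _ _ (Nonlin p mu phi psi (x + sg * t) 0) eps Hsg Heps).
  - apply Nonlin_characteristic_comparison; auto.
    apply Rabs_le. destruct Hsg as [-> | ->]; lra.
  - apply Nonlin_characteristic_comparison; auto.
    apply Rabs_le. destruct Hsg as [-> | ->]; lra.
  - eapply Rle_trans; [apply Hdf, (Omega_foot M sg Hsg), HO |].
    replace (x + sg * t) with (x + sg * (t - 0)) by ring.
    apply Nonlin_floor_le_characteristic; auto; lra.
Qed.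

End ConeStep.

Lemma locally_ball M y : Rabs y < M -> locally y (fun z => Rabs z < M).
Proof.
  intros Hy. apply locally_R. exists (M - Rabs y). split; [lra |]. intros z Hz.
  pose proof (Rabs_triang (z - y) y). replace (z - y + y) with z in H by ring. lra.
Qed.

Lemma C1_ball_of_C4 M f : C4_closed_ball f M -> C1_ball M f (Derive f).
Proof.
  intros Hf y Hy. destruct (Hf 1%nat) as [Hex [h [Hh Hcont]]]; [lia |].
  split; [apply Derive_correct, (Hex y Hy) |].
  apply continuous_ext_loc with h.
  - eapply filter_imp; [| exact (locally_ball M y Hy)]. intros z Hz. apply Hh, Hz.
  - intros P HP. specialize (Hcont y (Rlt_le _ _ Hy) P HP). unfold filtermap, within in *.
    eapply filter_imp; [| exact (filter_and _ _ (locally_ball M y Hy) Hcont)].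
    intros z [Hz1 Hz2]. apply Hz2. lra.
Qed.

Lemma phi_n_S p mu g1 g2 f g n : phi_n p mu g1 g2 f g (S n)
  = duhamel 1 f (Nonlin p mu (phi_n p mu g1 g2 f g n) (psi_n p mu g1 g2 f g n)).
Proof.
  apply functional_extensionality; intros x. apply functional_extensionality; intros t.
  unfold phi_n, psi_n, duhamel, char_integral. simpl. destruct (iterates p mu g1 g2 f g n) as [ph ps]; simpl.
  rewrite Rmult_1_l. f_equal. apply RInt_ext. intros s _. f_equal. ring.
Qed.

Lemma psi_n_S p mu g1 g2 f g n : psi_n p mu g1 g2 f g (S n)
  = duhamel (-1) g (Nonlin p mu (phi_n p mu g1 g2 f g n) (psi_n p mu g1 g2 f g n)).
Proof.
  apply functional_extensionality; intros x. apply functional_extensionality; intros t.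
  unfold phi_n, psi_n, duhamel, char_integral. simpl. destruct (iterates p mu g1 g2 f g n) as [ph ps]; simpl.
  replace (x + -1 * t) with (x - t) by ring. f_equal. apply RInt_ext. intros s _. f_equal. ring.
Qed.

Lemma regular_const M c : regular M (fun _ _ => c).
Proof.
  intros x t _. unfold Dx, Dt. rewrite !Derive_const. split; [| split; [| split]].
  - apply continuity_2d_pt_const.
  - exists 0. auto_derive; auto.
  - apply continuity_2d_pt_ext with (fun _ _ => 0); [intros; symmetry; apply Derive_const |].
    apply continuity_2d_pt_const.
  - intros a. auto_derive; auto. ring.
Qed.

Section Iterates.

Variables (p mu g1 g2 eps M : R) (f g : R -> R).
Hypothesis Hp : 1 < p.
Hypothesis Hmu : 0 < mu.
Hypothesis Hg1 : 0 < g1.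
Hypothesis Hg2 : 0 < g2.
Hypothesis Heps : 0 < eps.
Hypothesis Hthreshold : mu * p * Rpower 2 p < Rpower (g1 + g2) (p - 1).
Hypothesis Hfloor : 0 <= Nonlin_floor p mu (g1 + g2).
Hypothesis Hf_low : forall y, Rabs y < M -> g1 <= f y.
Hypothesis Hg_low : forall y, Rabs y < M -> g2 <= g y.
Hypothesis Hf : C1_ball M f (Derive f).
Hypothesis Hg : C1_ball M g (Derive g).
Hypothesis Hdf : forall y, Rabs y < M -> (2 + eps) * Rabs (Derive f y) <= Nonlin_floor p mu (g1 + g2).
Hypothesis Hdg : forall y, Rabs y < M -> (2 + eps) * Rabs (Derive g y) <= Nonlin_floor p mu (g1 + g2).

Local Notation phi n := (phi_n p mu g1 g2 f g n).
Local Notation psi n := (psi_n p mu g1 g2 f g n).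

Lemma iterates_regular_invariant n :
  regular M (phi n) /\ regular M (psi n) /\ cone_invariant M (g1 + g2) eps (phi n) (psi n).
Proof.
  induction n as [| n [Hphi [Hpsi Hinv]]].
  - unfold phi_n, psi_n; simpl.
    split; [| split]; [apply regular_const .. |].
    intros x t _ _. unfold Dx, Dt. rewrite !Derive_const, Rabs_R0. lra.
  - rewrite phi_n_S, psi_n_S.
    assert (HN := Nonlin_x_regular M p mu (phi n) (psi n) Hp Hphi Hpsi).
    assert (Hsg1 : (1 = 1 \/ 1 = -1)) by (left; reflexivity).
    assert (Hsg2 : (-1 = 1 \/ -1 = -1)) by (right; reflexivity).
    split; [exact (duhamel_regular M 1 Hsg1 f (Derive f) _ _ Hf HN) |].
    split; [exact (duhamel_regular M (-1) Hsg2 g (Derive g) _ _ Hg HN) |].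
    intros x t HO Ht.
    rewrite (Dx_duhamel M 1 Hsg1 f (Derive f) _ _ Hf HN), (Dt_duhamel M 1 Hsg1 f (Derive f) _ _ Hf HN),
      (Dx_duhamel M (-1) Hsg2 g (Derive g) _ _ Hg HN), (Dt_duhamel M (-1) Hsg2 g (Derive g) _ _ Hg HN)
      by exact HO.
    assert (HG : 0 < g1 + g2) by lra.
    split; [| split].
    + unfold duhamel.
      pose proof (Hf_low _ (Omega_foot M 1 Hsg1 x t HO)).
      pose proof (Hg_low _ (Omega_foot M (-1) Hsg2 x t HO)).
      pose proof (char_integral_Nonlin_nonneg M p mu _ eps 1 (phi n) (psi n)
        Hsg1 Hp Hmu HG Hthreshold Hphi Hpsi Hinv x t Hfloor HO Ht).
      pose proof (char_integral_Nonlin_nonneg M p mu _ eps (-1) (phi n) (psi n)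
        Hsg2 Hp Hmu HG Hthreshold Hphi Hpsi Hinv x t Hfloor HO Ht).
      lra.
    + exact (duhamel_cone_condition M p mu _ eps 1 (phi n) (psi n)
        Hsg1 Hp Hmu Heps HG Hthreshold Hphi Hpsi Hinv f _ x t Hf Hdf HO Ht).
    + exact (duhamel_cone_condition M p mu _ eps (-1) (phi n) (psi n)
        Hsg2 Hp Hmu Heps HG Hthreshold Hphi Hpsi Hinv g _ x t Hg Hdg HO Ht).
Qed.

End Iterates.

Lemma regular_ex_derive_t M phi x t : regular M phi -> Omega M x t -> ex_derive (fun s => phi x s) t.
Proof.
  intros Hphi HO. destruct (Hphi x t HO) as [_ [_ [_ Hdir]]].
  eexists. apply (is_derive_ext (fun tau => phi (x + 0 * (tau - t)) tau)); [| apply Hdir].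
  intros tau. rewrite Rmult_0_l, Rplus_0_r. reflexivity.
Qed.

Lemma Omega_of_in_K Rs Ts x t : in_K Rs Ts x t -> Omega (Rs + Ts) x t.
Proof.
  intros [Ht [x0 [H1 H2]]]. unfold Omega. Rabs_elim.
  repeat split; try apply Rabs_def1; lra.
Qed.

Lemma mult_Rabs_sum_le_split k a b c : 0 <= k -> k * (Rabs a + Rabs b) <= c ->
  k * Rabs a <= c /\ k * Rabs b <= c.
Proof.
  intros Hk H. pose proof (Rabs_pos a). pose proof (Rabs_pos b).
  split; (eapply Rle_trans; [| exact H]); apply Rmult_le_compat_l; lra.
Qed.

Theorem lemma4p2
  (p mu Rs Ts gamma1 gamma2 eps0 : R) (f g : R -> R)
  (Hp : 1 < p) (Hmu : 0 < mu) (Hpmu : p < 1 + 2 / mu)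
  (HRs : 0 < Rs) (HTs : 0 < Ts)
  (Hg1 : 0 < gamma1) (Hg2 : 0 < gamma2)
  (Hgam : Rmax 1 (Rpower (mu * p * Rpower 2 p) (/ (p - 1))) < gamma1 + gamma2)
  (* (A2) *)
  (HA2f : forall x, Rabs x < Rs + Ts -> gamma1 <= f x)
  (HA2g : forall x, Rabs x < Rs + Ts -> gamma2 <= g x)
  (* (A3) *)
  (HA3f : C4_closed_ball f (Rs + Ts))
  (HA3g : C4_closed_ball g (Rs + Ts))
  (* (A4) *)
  (Heps0 : 0 < eps0)
  (HA4 : forall x, Rabs x < Rs + Ts ->
     (2 + eps0) * (Rabs (Derive f x) + Rabs (Derive g x))
       <= Rpower 2 (- p) * Rpower (gamma1 + gamma2) p - mu / 2 * (gamma1 + gamma2)) :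
  forall (n : nat) (x t : R), in_K Rs Ts x t ->
    let phi := phi_n p mu gamma1 gamma2 f g n in
    let psi := psi_n p mu gamma1 gamma2 f g n in
    ex_derive (fun s => phi x s) t /\ ex_derive (fun y => phi y t) x /\
    ex_derive (fun s => psi x s) t /\ ex_derive (fun y => psi y t) x /\
    Derive (fun s => phi x s) t >= (1 + eps0) * Rabs (Derive (fun y => phi y t) x) /\
    Derive (fun s => psi x s) t >= (1 + eps0) * Rabs (Derive (fun y => psi y t) x).
Proof.
  intros n x t HK phi psi.
  assert (Hthreshold : mu * p * Rpower 2 p < Rpower (gamma1 + gamma2) (p - 1))
    by (apply Rpower_threshold; auto; eapply Rle_lt_trans; [apply Rmax_r | exact Hgam]).
  assert (HA4' := fun y Hy => mult_Rabs_sum_le_split (2 + eps0) _ _ _ ltac:(lra) (HA4 y Hy)).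
  assert (Hfloor : 0 <= Nonlin_floor p mu (gamma1 + gamma2)).
  { eapply Rle_trans; [| exact (proj1 (HA4' 0 ltac:(rewrite Rabs_R0; lra)))].
    apply Rmult_le_pos; [lra | apply Rabs_pos]. }
  destruct (iterates_regular_invariant p mu gamma1 gamma2 eps0 (Rs + Ts) f g Hp Hmu Hg1 Hg2 Heps0
    Hthreshold Hfloor HA2f HA2g (C1_ball_of_C4 _ _ HA3f) (C1_ball_of_C4 _ _ HA3g)
    (fun y Hy => proj1 (HA4' y Hy)) (fun y Hy => proj2 (HA4' y Hy)) n) as [Hphi [Hpsi Hinv]].
  pose proof (Omega_of_in_K Rs Ts x t HK) as HO.
  destruct (Hinv x t HO (Rlt_le _ _ (proj1 HK))) as [_ [Hcone_phi Hcone_psi]].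
  repeat split.
  - apply (regular_ex_derive_t (Rs + Ts)); auto.
  - apply (Hphi x t HO).
  - apply (regular_ex_derive_t (Rs + Ts)); auto.
  - apply (Hpsi x t HO).
  - apply Rle_ge, Hcone_phi.
  - apply Rle_ge, Hcone_psi.
Qed.
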